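(* Let $M=p_1^{n_1}\cdots p_K^{n_K}$ with distinct primes and $n_\nu\in\mathbb{N}$, let $A\oplus B=\mathbb{Z}_M$, and fix $i$. Suppose $0\in B$ and that the tiling has $A$-uniform $(B,A)$ splitting parity in the $p_i$ direction, i.e. every fiber $a*F_i$ with $a\in A$ splits with parity $(B,A)$. Then $\Phi_{p_i^{n_i}}(X)\mid A(X)$.
   Context: $A\oplus B=\mathbb{Z}_M$ means every element of $\mathbb{Z}_M$ is uniquely $a+b$ with $a\in A$, $b\in B$. $A(X)=\sum_{a\in A}X^a$ with $A$ viewed in $\{0,\dots,M-1\}$; $\Phi_s$ is the $s$-th cyclotomic polynomial. $F_i=\{0,M/p_i,\dots,(p_i-1)M/p_i\}$, $x*F_i=\{x+f:f\in F_i\}$. For $Z\subset\mathbb{Z}_M$, $\Sigma_A(Z)=\{a\in A: a+b\in Z\text{ for some }b\in B\}$, $\Sigma_B(Z)=\{b\in B: a+b\in Z\text{ for some }a\in A\}$. A fiber $Z=x*F_i$ splits with parity $(B,A)$ if $p_i^{n_i}\mid b-b'$ for all $b,b'\in\Sigma_B(Z)$ and, for all distinct $a,a'\in\Sigma_A(Z)$, $p_i^{n_i-1}\mid a-a'$ but $p_i^{n_i}\nmid a-a'$. *)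

From mathcomp Require Import all_boot all_order all_algebra all_field.
Set Implicit Arguments. Unset Strict Implicit. Unset Printing Implicit Defensive.
Import GRing.Theory.

(* Z_M is modelled by 'I_M (residues 0..M-1) with addition mod M. *)

Definition tiling (M : nat) (A B : {set 'I_M}) : Prop :=
  forall x : 'I_M, exists! ab : 'I_M * 'I_M,
    [/\ ab.1 \in A, ab.2 \in B & (ab.1 + ab.2) %% M = x].

Definition fiber (M p : nat) (x : 'I_M) : {set 'I_M} :=
  [set y : 'I_M | [exists k : 'I_p, val y == (x + k * (M %/ p)) %% M]].

Definition SigmaA (M : nat) (A B Z : {set 'I_M}) : {set 'I_M} :=
  [set a in A | [exists b in B, exists z in Z, val z == (a + b) %% M]].
Definition SigmaB (M : nat) (A B Z : {set 'I_M}) : {set 'I_M} :=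
  [set b in B | [exists a in A, exists z in Z, val z == (a + b) %% M]].

(* Z splits with parity (B,A) in the p direction, n = exponent of p in M.
   Since p^n | M, divisibility of a difference in Z_M by p^k (k <= n) is
   congruence of representatives mod p^k. *)
Definition splits_BA (M p n : nat) (A B Z : {set 'I_M}) : Prop :=
  (forall b b', b \in SigmaB A B Z -> b' \in SigmaB A B Z ->
     val b = val b' %[mod p ^ n]) /\
  (forall a a', a \in SigmaA A B Z -> a' \in SigmaA A B Z -> a != a' ->
     val a = val a' %[mod p ^ n.-1] /\ val a <> val a' %[mod p ^ n]).

Definition maskpoly (M : nat) (A : {set 'I_M}) : {poly int} :=
  \sum_(a in A) 'X^(val a).

From mathcomp Require Import all_boot all_order all_algebra all_field.
Set Implicit Arguments. Unset Strict Implicit. Unset Printing Implicit Defensive.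
Import GRing.Theory.

(* Let n = logn p M and s = M / p.  For a in A decompose a + s = phi(a) + beta(a)
   along the tiling.  The fiber a * F_p contains both a = a + 0 and a + s, so 0
   and beta(a) lie in Sigma_B of that fiber and the (B, A) parity gives
   p^n | beta(a), i.e. phi(a) = a + s mod p^n; only this half of the parity
   condition is needed.  Uniqueness of decompositions makes phi a permutation of
   A, hence X^s A(X) = A(X) mod X^(p^n) - 1.  As s = r p^(n-1) with r prime to p,
   also X^(p^(n-1)) A(X) = A(X) mod X^(p^n) - 1, and cancelling X^(p^(n-1)) - 1
   from X^(p^n) - 1 = (X^(p^(n-1)) - 1) Phi_(p^n)(X) leaves Phi_(p^n) | A. *)

Section Xperiodic.
Variable R : idomainType.
Local Open Scope ring_scope.

Definition Xperiodic (D P : {poly R}) (t : nat) := D %| 'X^t * P - P.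

Lemma Xn_sub1_dvd_XsubX (N u v : nat) : (u = v %[mod N])%N ->
  ('X^N - 1 : {poly R}) %| 'X^u - 'X^v.
Proof.
wlog le_vu : u v / (v <= u)%N => [IH|] huv.
  have [le_vu|/ltnW le_uv] := leqP v u; first exact: IH.
  by rewrite -dvdpNr opprB IH.
have [t def_u] : exists t, u = (v + t * N)%N.
  exists ((u - v) %/ N)%N; rewrite divnK ?subnKC //.
  by rewrite -eqn_mod_dvd // huv.
rewrite def_u exprD -{2}[_ ^+ v]mulr1 -mulrBr; apply: dvdp_mull.
by rewrite mulnC exprM (subrX1 'X^N) dvdp_mulIl.
Qed.

Lemma XperiodicD D P t1 t2 :
  Xperiodic D P t1 -> Xperiodic D P t2 -> Xperiodic D P (t1 + t2).
Proof.
rewrite /Xperiodic => h1 h2.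
have -> : 'X^(t1 + t2) * P - P = 'X^t1 * ('X^t2 * P - P) + ('X^t1 * P - P).
  by rewrite exprD mulrBr mulrA addrA subrK.
by apply: dvdp_add; first apply: dvdp_mull.
Qed.

Lemma XperiodicMn D P t j : Xperiodic D P t -> Xperiodic D P (j * t).
Proof.
move=> ht; elim: j => [|j IHj]; first by rewrite /Xperiodic mul1r subrr dvdp0.
by rewrite mulSn XperiodicD.
Qed.

Lemma Xperiodic_modn N P u v : (u = v %[mod N])%N ->
  Xperiodic ('X^N - 1) P u -> Xperiodic ('X^N - 1) P v.
Proof.
rewrite /Xperiodic => huv hu.
have -> : 'X^v * P - P = ('X^v - 'X^u) * P + ('X^u * P - P).
  by rewrite mulrBl addrA subrK.
by apply: dvdp_add => //; apply/dvdp_mulr/Xn_sub1_dvd_XsubX.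
Qed.

Lemma Xperiodic_coprime (p q r : nat) P : (0 < r)%N -> coprime r p ->
  Xperiodic ('X^(q * p) - 1) P (r * q) -> Xperiodic ('X^(q * p) - 1) P q.
Proof.
move=> r_gt0 co_rp /(XperiodicMn (egcdn r p).1); apply: Xperiodic_modn.
case: egcdnP => // km kn def_km _ /=.
by rewrite mulnA def_km (eqP co_rp) mulnDl mul1n -mulnA [(p * q)%N]mulnC modnMDl.
Qed.

End Xperiodic.

Lemma divisors_pfactorS p k : prime p ->
  perm_eq (divisors (p ^ k.+1)) (p ^ k.+1 :: divisors (p ^ k)).
Proof.
move=> pr_p; have pk_gt0 j : (0 < p ^ j)%N by rewrite expn_gt0 prime_gt0.
apply: uniq_perm; rewrite /= ?divisors_uniq ?andbT //.
  by rewrite -dvdn_divisors // dvdn_Pexp2l ?prime_gt1 // ltnn.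
move=> d; rewrite in_cons -!dvdn_divisors //.
apply/(dvdn_pfactor _ _ pr_p)/predU1P => [[j]|[->|]].
- by rewrite leq_eqVlt => /predU1P[-> ->|lt_jk ->]; [left|right; rewrite dvdn_exp2l].
- by exists k.+1.
- by case/(dvdn_pfactor _ _ pr_p) => j le_jk ->; exists j; first exact: leqW.
Qed.

Lemma Xn_sub1_pfactorS p k : prime p ->
  ('X^(p ^ k.+1) - 1 = ('X^(p ^ k) - 1) * 'Phi_(p ^ k.+1) :> {poly int})%R.
Proof.
move=> pr_p; have pk_gt0 j : (0 < p ^ j)%N by rewrite expn_gt0 prime_gt0.
by rewrite -!prod_Cyclotomic // (perm_big _ (divisors_pfactorS k pr_p)) big_cons mulrC.
Qed.

Lemma Cyclotomic_pfactor_dvd p k (P : {poly int}) : prime p ->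
  Xperiodic ('X^(p ^ k.+1) - 1) P (p ^ k) -> ('Phi_(p ^ k.+1) %| P)%R.
Proof.
move=> pr_p; rewrite /Xperiodic (Xn_sub1_pfactorS k pr_p) -{2}[P]mul1r -mulrBl.
by rewrite dvdp_mul2l // -[1%R]polyC1 monic_neq0 ?monicXnsubC ?expn_gt0 ?prime_gt0.
Qed.

Lemma maskpoly_Xperiodic M (A : {set 'I_M}) (f : 'I_M -> 'I_M) N d :
  {in A &, injective f} -> {in A, forall a, f a \in A} ->
  {in A, forall a, f a = a + d %[mod N]} ->
  Xperiodic ('X^N - 1) (maskpoly A) d.
Proof.
move=> f_inj fA f_mod.
have fAA : f @: A = A.
  apply/eqP; rewrite eqEcard card_in_imset // leqnn andbT.
  by apply/subsetP => _ /imsetP[a aA ->]; apply: fA.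
rewrite /Xperiodic {2}/maskpoly -{2}fAA big_imset //= mulr_sumr -sumrB.
apply: (big_ind (fun Q => 'X^N - 1 %| Q)%R) => [||a aA]; first exact: dvdp0.
  exact: dvdp_add.
by rewrite -exprD Xn_sub1_dvd_XsubX // addnC f_mod.
Qed.

Section Tiling.
Variables (M : nat) (A B : {set 'I_M}).
Hypothesis tilAB : tiling A B.

Definition ord_addn (x : 'I_M) (d : nat) : 'I_M :=
  Ordinal (ltn_pmod (x + d) (leq_ltn_trans (leq0n x) (ltn_ord x))).

Definition tile_pred (x : 'I_M) (ab : 'I_M * 'I_M) :=
  [&& ab.1 \in A, ab.2 \in B & (ab.1 + ab.2) %% M == x].

Definition tile_decomp (x : 'I_M) : 'I_M * 'I_M :=
  odflt (x, x) [pick ab | tile_pred x ab].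

Lemma tile_decompP x : tile_pred x (tile_decomp x).
Proof.
rewrite /tile_decomp; case: pickP => [ab //|no_ab].
have [ab [[abA abB abx] _]] := tilAB x.
by have := no_ab ab; rewrite /tile_pred abA abB abx eqxx.
Qed.

Lemma tile_decomp_uniq x ab : tile_pred x ab -> ab = tile_decomp x.
Proof.
have [c [_ c_uniq]] := tilAB x.
have tile_predE ab' : tile_pred x ab' -> c = ab'.
  by case/and3P => ab'A ab'B /eqP ab'x; apply: c_uniq.
by move=> /tile_predE <-; apply/tile_predE/tile_decompP.
Qed.

Definition translate_A (d : nat) (a : 'I_M) : 'I_M := (tile_decomp (ord_addn a d)).1.

Lemma translate_A_in d a : translate_A d a \in A.
Proof. by case/and3P: (tile_decompP (ord_addn a d)). Qed.

Lemma translate_A_inj d : {in A &, injective (translate_A d)}.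
Proof.
move=> a1 a2 a1A a2A; rewrite /translate_A.
case: (tile_decomp _) (tile_decompP (ord_addn a1 d)) => c b1 /and3P[_ b1B /eqP e1].
case: (tile_decomp _) (tile_decompP (ord_addn a2 d)) => c2 b2 /and3P[_ b2B /eqP e2].
move=> /= eq_c; subst c2; rewrite /= in e1 e2 b1B b2B.
have x1 : tile_pred (ord_addn a1 b2) (a1, b2) by rewrite /tile_pred a1A b2B eqxx.
have x2 : tile_pred (ord_addn a1 b2) (a2, b1).
  rewrite /tile_pred a2A b1B /= -(eqn_modDr d) -[_ + b1 + d]addnAC -[_ + b2 + d]addnAC.
  by rewrite -modnDml -e2 -[X in _ == X]modnDml -e1 modnDml modnDml addnAC.
by have := tile_decomp_uniq x1; rewrite -(tile_decomp_uniq x2) => -[->].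
Qed.

Lemma fiber_tile_B_mod p n (a y b0 : 'I_M) : b0 \in B -> val b0 = 0 ->
  a \in A -> y \in fiber p a -> splits_BA p n A B (fiber p a) ->
  val (tile_decomp y).2 = 0 %[mod p ^ n].
Proof.
move=> b0B b00 aA yF [sameB _]; have := yF; rewrite inE => /existsP[k _].
have p_gt0 : 0 < p := leq_ltn_trans (leq0n k) (ltn_ord k).
have aF : a \in fiber p a.
  by rewrite inE; apply/existsP; exists (Ordinal p_gt0); rewrite /= mul0n addn0 modn_small.
have [yA yB /eqP yE] := and3P (tile_decompP y).
rewrite -b00; apply: sameB; rewrite inE ?yB ?b0B /=; apply/existsP.
- by exists (tile_decomp y).1; rewrite yA; apply/existsP; exists y; rewrite yF yE eqxx.
- by exists a; rewrite aA; apply/existsP; exists a; rewrite aF b00 addn0 modn_small ?eqxx.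
Qed.

Lemma translate_A_modn p n (a b0 : 'I_M) : 1 < p -> p ^ n %| M ->
  b0 \in B -> val b0 = 0 -> a \in A -> splits_BA p n A B (fiber p a) ->
  translate_A (M %/ p) a = a + M %/ p %[mod p ^ n].
Proof.
move=> p_gt1 pnM b0B b00 aA split_a.
have yF : ord_addn a (M %/ p) \in fiber p a.
  by rewrite inE; apply/existsP; exists (Ordinal p_gt1); rewrite /= mul1n.
have [_ _ /eqP yE] := and3P (tile_decompP (ord_addn a (M %/ p))).
have b_mod := fiber_tile_B_mod b0B b00 aA yF split_a.
rewrite /translate_A -[nat_of_ord (tile_decomp _).1]addn0 -modnDmr -b_mod modnDmr.
by rewrite -(modn_dvdm _ pnM) yE /= (modn_dvdm _ pnM).
Qed.

End Tiling.

Theorem corollary4p9 (M p : nat) (A B : {set 'I_M}) :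
  prime p -> p %| M ->
  tiling A B ->
  (exists2 b0 : 'I_M, b0 \in B & val b0 = 0) ->
  (forall a, a \in A -> splits_BA p (logn p M) A B (fiber p a)) ->
  ('Phi_(p ^ logn p M) %| maskpoly A)%R.
Proof.
move=> pr_p pM tilAB [b0 b0B b00] split_A.
have M_gt0 : 0 < M := leq_ltn_trans (leq0n b0) (ltn_ord b0).
have [r co_pr def_M] := pfactor_coprime pr_p M_gt0.
have [k def_n] : exists k, logn p M = k.+1.
  by exists (logn p M).-1; rewrite prednK // logn_gt0 mem_primes pr_p M_gt0 pM.
rewrite def_n in def_M split_A *.
have r_gt0 : 0 < r by move: M_gt0; rewrite def_M muln_gt0 => /andP[].
have def_s : M %/ p = r * p ^ k by rewrite def_M expnSr mulnA mulnK ?prime_gt0.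
apply: Cyclotomic_pfactor_dvd => //; rewrite expnSr.
apply: (@Xperiodic_coprime _ p _ r) => //; first by rewrite coprime_sym.
rewrite -expnSr -def_s.
apply: (maskpoly_Xperiodic (f := translate_A A B (M %/ p))) => [||a aA].
- exact: translate_A_inj.
- by move=> a _; apply: translate_A_in.
- by apply: translate_A_modn b0B b00 aA (split_A a aA); rewrite ?prime_gt1 ?def_M ?dvdn_mull.
Qed.
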